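(* Let $X$ be a Hausdorff topological space and $f:X\to X$ a continuous mapping. Suppose there exists $x_0\in X$ such that for each open cover $\mathcal{U}$ of $X$ there are $n\in\mathbb{N}_0$ and $U\in\mathcal{U}$ with $\{f^n(x_0),f^{n+1}(x_0)\}\subseteq U$. Then $f$ has a fixed point.
   Context: $\mathbb{N}_0=\{0,1,2,\dots\}$; $f^n$ denotes the $n$-fold iterate of $f$, with $f^0$ the identity. *)

From HB Require Import structures.
From mathcomp Require Import all_boot all_order.
From mathcomp Require Import all_classical all_reals all_analysis.
Set Implicit Arguments. Unset Strict Implicit. Unset Printing Implicit Defensive.

From HB Require Import structures.
From mathcomp Require Import all_boot all_order.
From mathcomp Require Import all_classical all_reals all_analysis.
Local Open Scope classical_set_scope.

(* If f had no fixed point, Hausdorff separation of x and f x by disjoint open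
   sets A and B would give the open neighbourhood A `&` f @^-1` B of x, which
   contains no point together with its f-image.  Such sets cover X, so by
   hypothesis one of them contains both f^n x0 and f (f^n x0): contradiction. *)

Section FixedPointFreeCover.
Variables (X : topologicalType) (f : X -> X).
Hypotheses (hX : hausdorff_space X) (fc : continuous f).

Lemma open_nbhs_disjoint_preimage {x : X} : f x != x ->
  exists U : set X, [/\ open U, U x & U `&` f @^-1` U = set0].
Proof.
rewrite eq_sym => xNfx.
move: hX; rewrite open_hausdorff => /(_ _ _ xNfx) [[A B] /= [Ax Bfx]].
move=> [oA oB /eqP AB0].
exists (A `&` f @^-1` B); split.
- by apply: openI => //; apply: open_comp => // z _; exact: fc.
- by split; apply/set_mem.
- apply/seteqP; split => // y [[Ay By] [Afy _]].
  have : (A `&` B) (f y) by [].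
  by rewrite AB0.
Qed.

Lemma open_disjoint_preimage_cover : (forall x, f x != x) ->
  \bigcup_(U in [set U | open U /\ U `&` f @^-1` U = set0]) U = setT.
Proof.
move=> nofix; apply/seteqP; split => // x _.
by have [U [oU Ux UfU0]] := open_nbhs_disjoint_preimage (nofix x); exists U.
Qed.

End FixedPointFreeCover.

Theorem theorem3 (X : topologicalType) (f : X -> X) :
  hausdorff_space X -> continuous f ->
  (exists x0 : X, forall C : set (set X),
      (forall U, C U -> open U) -> (\bigcup_(U in C) U = setT) ->
      exists (n : nat) (U : set X),
        C U /\ U (iter n f x0) /\ U (iter n.+1 f x0)) ->
  exists x : X, f x = x.
Proof.
move=> hX fc [x0 orbit_step_in_cover]; apply: contrapT => nofix.
have moves_all : forall x, f x != x by move=> x; apply/eqP => fx; apply: nofix; exists x.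
have [n [U [[_ UfU0] [Un USn]]]] :=
  orbit_step_in_cover [set U | open U /\ U `&` f @^-1` U = set0]
    (fun U UC => UC.1) (@open_disjoint_preimage_cover X f hX fc moves_all).
suff : (U `&` f @^-1` U) (iter n f x0) by rewrite UfU0.
by split.
Qed.
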